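(* In the standing setting, with $\mathbf K_1,\mathbf K_2$ constant symmetric positive definite and the control law $\mathbf u(t)=-(\mathbf I_3+\mathbf K_2\mathbf K_1)\mathbf z_1(t)-(\mathbf K_1+\mathbf K_2)\mathbf z_2(t)-\mathbf f_a(t,\mathbf z_1(t))$, let $t_s>0$, let $$\mathbf X=\begin{bmatrix}\mathbf I_3+\mathbf K_1\mathbf K_1 & \mathbf K_1\\ \mathbf K_1&\mathbf I_3\end{bmatrix},\qquad r=\min_{j=1,\dots,P,\ t\in[0,t_s]}\|\mathbf w_j(t)\|,$$ and define the open ellipsoid $\mathcal E=\{\mathbf y\in\mathbb R^6:\mathbf y^T\mathbf X\mathbf y<\lambda_{\min}(\mathbf X)r^2\}$. Then $\mathcal E\subset\mathcal D(t)$ for all $t\in[0,t_s]$, every closed-loop trajectory with $\mathbf z_0\in\mathcal E$ remains in $\mathcal E$ for all $t\in[0,t_s]$, and there exist constants $c_1,c_2>0$ (depending only on $\mathbf K_1,\mathbf K_2$) such that $\|\mathbf z(t)\|\le c_1\|\mathbf z_0\|e^{-c_2t}$ for all $t\in[0,t_s]$ and all $\mathbf z_0\in\mathcal E$.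
   Context: Standing setting: Let $P\ge1$. For $j=1,\dots,P$ let $\mu_j>0$ and let $\mathbf r_j:[0,\infty)\to\mathbb R^3$ be continuously differentiable, with $\mathbf r_1\equiv\mathbf 0$. Let $\mathbf r^*:[0,\infty)\to\mathbb R^3$ be continuously differentiable (the target trajectory) with $\mathbf r^*(t)\neq\mathbf r_j(t)$ for all $t\ge0$ and all $j$, and set $\mathbf w_j(t):=\mathbf r_j(t)-\mathbf r^*(t)$. For $t\ge0$ and $\mathbf z_1\in\mathbb R^3$ with $\mathbf z_1\ne\mathbf w_j(t)$ for all $j$, define $$\mathbf f_a(t,\mathbf z_1)=\sum_{j=1}^P\mu_j\left(\frac{\mathbf w_j(t)-\mathbf z_1}{\|\mathbf w_j(t)-\mathbf z_1\|^3}-\frac{\mathbf w_j(t)}{\|\mathbf w_j(t)\|^3}\right).$$ The controlled error dynamics are $\dot{\mathbf z}_1(t)=\mathbf z_2(t)$, $\dot{\mathbf z}_2(t)=\mathbf f_a(t,\mathbf z_1(t))+\mathbf u(t)$, with state $\mathbf z=(\mathbf z_1,\mathbf z_2)\in\mathbb R^6$, control $\mathbf u(t)\in\mathbb R^3$, initial time $0$ and $\mathbf z_0:=\mathbf z(0)$. The vector field is defined on $\mathcal D(t)=\{(\mathbf x,\mathbf y)\in\mathbb R^6:\mathbf x\neq\mathbf w_j(t),\ j=1,\dots,P\}$. $\|\cdot\|$ is the Euclidean norm, $\lambda_{\min},\lambda_{\max}$ denote smallest/largest eigenvalues. Note $r>0$ since the $\mathbf w_j$ are continuous and nonvanishing on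 $[0,t_s]$. *)

From HB Require Import structures.
From mathcomp Require Import all_boot all_order all_algebra.
From mathcomp Require Import all_classical all_reals all_analysis.
Set Implicit Arguments. Unset Strict Implicit. Unset Printing Implicit Defensive.
Import Order.TTheory GRing.Theory Num.Theory.
Import numFieldNormedType.Exports.
Local Open Scope classical_set_scope.
Local Open Scope ring_scope.

Section Defs.
Variable R : realType.

Definition enorm n (v : 'cV[R]_n) : R := Num.sqrt (\sum_i (v i ord0) ^+ 2).

Definition qform n (M : 'M[R]_n) (v : 'cV[R]_n) : R := (v^T *m M *m v) ord0 ord0.

Definition sym_posdef n (M : 'M[R]_n) : Prop :=
  M^T = M /\ forall v : 'cV[R]_n, v != 0 -> 0 < qform M v.

Definition is_lambda_min n (M : 'M[R]_n) (lam : R) : Prop :=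
  eigenvalue M lam /\ forall mu, eigenvalue M mu -> lam <= mu.

(* f has derivative d at t, relative to the set A (one-sided at endpoints) *)
Definition has_deriv_within n (A : set R) (f : R -> 'cV[R]_n) (t : R)
    (d : 'cV[R]_n) : Prop :=
  (fun h : R => h^-1 *: (f (t + h) - f t))
    @ (within (fun h => A (t + h)) ((0 : R)^')) --> d.

Definition C1_nonneg n (f : R -> 'cV[R]_n) : Prop :=
  exists g : R -> 'cV[R]_n,
    {within `[0, +oo[, continuous g} /\
    forall t, 0 <= t -> has_deriv_within `[0, +oo[ f t (g t).

Definition f_a (P : nat) (mu : 'I_P -> R) (w : 'I_P -> R -> 'cV[R]_3)
    (t : R) (z1 : 'cV[R]_3) : 'cV[R]_3 :=
  \sum_(j < P) mu j *:
    ((enorm (w j t - z1) ^+ 3)^-1 *: (w j t - z1)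
     - (enorm (w j t) ^+ 3)^-1 *: w j t).

Definition domD (P : nat) (w : 'I_P -> R -> 'cV[R]_3) (t : R) : set 'cV[R]_(3 + 3) :=
  [set y | forall j, usubmx y != w j t].

Definition Xmat (K1 : 'M[R]_3) : 'M[R]_(3 + 3) :=
  block_mx (1%:M + K1 *m K1) K1 K1 1%:M.

Definition control (P : nat) (mu : 'I_P -> R) (w : 'I_P -> R -> 'cV[R]_3)
    (K1 K2 : 'M[R]_3) (t : R) (z1 z2 : 'cV[R]_3) : 'cV[R]_3 :=
  - ((1%:M + K2 *m K1) *m z1) - ((K1 + K2) *m z2) - f_a mu w t z1.

End Defs.

(** With the shear [S = [[I, 0], [K1, I]]] one has [X = S^T S], so
    [V(z) = z^T X z = |z1|^2 + |e|^2] where [e = K1 z1 + z2].  The control cancels [f_a]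
    and the closed loop reads [z1' = z2], [e' = - z1 - K2 e], whence
    [V' = - 2 z1^T K1 z1 - 2 e^T K2 e <= - 2 kappa V] for a common coercivity constant
    [kappa] of [K1] and [K2].  Hence [V(t) <= V(0) exp (- 2 kappa t)]: the ellipsoid is
    invariant and [|z|] decays like [exp (- kappa t)].  Since [det X = 1] and
    [det (I - X) = - (det K1)^2], the characteristic polynomial of [X] has a root in
    [[0, 1]], so [lambda_min X <= 1]; a point of the ellipsoid therefore has
    [|z1|^2 <= V < r^2 <= |w_j(t)|^2] and lies in [D(t)]. *)

From HB Require Import structures.
From mathcomp Require Import all_boot all_order all_algebra.
From mathcomp Require Import all_classical all_reals all_analysis.
From mathcomp Require Import ring lra.
Import Order.TTheory GRing.Theory Num.Theory.
Import numFieldNormedType.Exports.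
Local Open Scope classical_set_scope.
Local Open Scope ring_scope.
Set Implicit Arguments. Unset Strict Implicit. Unset Printing Implicit Defensive.

Section Quadratic_forms.
Variable R : realType.
Implicit Types n : nat.

Definition dot n (u v : 'cV[R]_n) : R := (u^T *m v) ord0 ord0.

Definition nsq n (v : 'cV[R]_n) : R := \sum_i v i ord0 ^+ 2.

Definition mx_l1 n (M : 'M[R]_n) : R := \sum_i \sum_j `|M i j|.

Lemma dotC n (u v : 'cV[R]_n) : dot u v = dot v u.
Proof. by rewrite /dot -[u^T *m v]trmxK trmx_mul trmxK mxE. Qed.

Lemma dotDr n (u v v' : 'cV[R]_n) : dot u (v + v') = dot u v + dot u v'.
Proof. by rewrite /dot mulmxDr mxE. Qed.

Lemma dotNr n (u v : 'cV[R]_n) : dot u (- v) = - dot u v.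
Proof. by rewrite /dot mulmxN mxE. Qed.

Lemma dotZr n (u v : 'cV[R]_n) c : dot u (c *: v) = c * dot u v.
Proof. by rewrite /dot -scalemxAr mxE. Qed.

Lemma dotDl n (u u' v : 'cV[R]_n) : dot (u + u') v = dot u v + dot u' v.
Proof. by rewrite dotC dotDr !(dotC v). Qed.

Lemma dotNl n (u v : 'cV[R]_n) : dot (- u) v = - dot u v.
Proof. by rewrite dotC dotNr dotC. Qed.

Lemma dotZl n (u v : 'cV[R]_n) c : dot (c *: u) v = c * dot u v.
Proof. by rewrite dotC dotZr dotC. Qed.

Lemma dot_mulmxr n (M : 'M[R]_n) u v : dot u (M *m v) = dot (M^T *m u) v.
Proof. by rewrite /dot trmx_mul trmxK mulmxA. Qed.

Lemma qform_dot n (M : 'M[R]_n) v : qform M v = dot v (M *m v).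
Proof. by rewrite /qform /dot mulmxA. Qed.

Lemma nsq_dot n (v : 'cV[R]_n) : nsq v = dot v v.
Proof. by rewrite /dot mxE; apply: eq_bigr => i _; rewrite mxE expr2. Qed.

Lemma nsq_ge0 n (v : 'cV[R]_n) : 0 <= nsq v.
Proof. by apply: sumr_ge0 => i _; rewrite sqr_ge0. Qed.

Lemma enorm_sqr n (v : 'cV[R]_n) : enorm v ^+ 2 = nsq v.
Proof. by rewrite sqr_sqrtr // nsq_ge0. Qed.

Lemma enorm_ge0 n (v : 'cV[R]_n) : 0 <= enorm v.
Proof. exact: sqrtr_ge0. Qed.

Lemma enorm_le_nsq m n (u : 'cV[R]_m) (v : 'cV[R]_n) c :
  0 <= c -> nsq u <= c ^+ 2 * nsq v -> enorm u <= c * enorm v.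
Proof.
move=> c_ge0 uv; rewrite /enorm -[c]ger0_norm // -sqrtr_sqr -sqrtrM ?sqr_ge0 //.
by rewrite ler_sqrt // mulr_ge0 ?sqr_ge0 ?nsq_ge0.
Qed.

Lemma nsq_col_mx m n (a : 'cV[R]_m) (b : 'cV[R]_n) :
  nsq (col_mx a b) = nsq a + nsq b.
Proof.
rewrite /nsq big_split_ord /=.
by congr (_ + _); apply: eq_bigr => i _; rewrite ?col_mxEu ?col_mxEd.
Qed.

Lemma sqr_coord_le_nsq n (v : 'cV[R]_n) i : v i ord0 ^+ 2 <= nsq v.
Proof. by rewrite /nsq (bigD1 i) //= lerDl sumr_ge0 // => j _; rewrite sqr_ge0. Qed.

Lemma nsqB_le n (u v : 'cV[R]_n) : nsq (u - v) <= 2 * nsq u + 2 * nsq v.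
Proof.
rewrite /nsq !mulr_sumr -big_split; apply: ler_sum => i _ /=.
by rewrite !mxE; have := sqr_ge0 (u i ord0 + v i ord0); nra.
Qed.

Lemma mx_l1_ge0 n (M : 'M[R]_n) : 0 <= mx_l1 M.
Proof. by do 2!apply: sumr_ge0 => ? _. Qed.

Lemma qform_le_mx_l1 n (M : 'M[R]_n) v : qform M v <= mx_l1 M * nsq v.
Proof.
rewrite /qform -mulmxA mxE /mx_l1 big_distrl; apply: ler_sum => i _ /=.
rewrite !mxE mulr_sumr big_distrl; apply: ler_sum => j _ /=.
have := sqr_coord_le_nsq v i; have := sqr_coord_le_nsq v j.
have := sqr_ge0 (v i ord0 + v j ord0); have := sqr_ge0 (v i ord0 - v j ord0).
have := normr_ge0 (M i j).
case: (lerP 0 (M i j)) => [/ger0_norm|/ltr0_norm] ->; nra.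
Qed.

Lemma nsq_mulmx_le n (M : 'M[R]_n) v : nsq (M *m v) <= mx_l1 (M^T *m M) * nsq v.
Proof. by rewrite nsq_dot dot_mulmxr dotC mulmxA -qform_dot qform_le_mx_l1. Qed.

Lemma posdef_qform_ge0 n (K : 'M[R]_n) v : sym_posdef K -> 0 <= qform K v.
Proof.
case=> _ Kpos; have [->|/Kpos/ltW //] := eqVneq v 0.
by rewrite /qform mulmx0 mxE.
Qed.

Lemma posdef_unitmx n (K : 'M[R]_n) : sym_posdef K -> K \in unitmx.
Proof.
case=> _ Kpos; rewrite unitmxE unitfE; apply/negP => /det0P[v v0 vK].
by have := Kpos v^T; rewrite trmx_eq0 /qform trmxK vK mul0mx mxE ltxx => /(_ v0).
Qed.

Lemma posdef_qform_lb n (K : 'M[R]_n) : sym_posdef K ->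
  exists2 k : R, 0 < k & forall v, k * nsq v <= qform K v.
Proof.
move=> PK; have [Ksym _] := PK; have Kunit := posdef_unitmx PK.
pose s := (mx_l1 (invmx K) + 1)^-1.
have s_gt0 : 0 < s by rewrite invr_gt0 ltr_wpDl ?mx_l1_ge0.
have sM : s * mx_l1 (invmx K) = 1 - s.
  rewrite -[X in X - s](mulVf (x := mx_l1 (invmx K) + 1)) ?gt_eqF ?ltr_wpDl ?mx_l1_ge0 //.
  by rewrite -/s; ring.
exists s => // v; pose u := invmx K *m v.
have Ku : K *m u = v by rewrite mulmxA mulmxV // mul1mx.
(* Test positivity at [v - s u]: the cross terms contribute [- 2 s |v|^2]. *)
have := posdef_qform_ge0 (v - s *: u) PK.
have -> : qform K (v - s *: u) = qform K v - 2 * s * nsq v + s ^+ 2 * dot u v.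
  rewrite !qform_dot mulmxBr -scalemxAr Ku !(dotDl, dotNl, dotZl, dotDr, dotNr, dotZr).
  rewrite [dot u (K *m v)]dot_mulmxr Ksym Ku -nsq_dot; ring.
suff : s ^+ 2 * dot u v <= s * nsq v by lra.
apply: le_trans (_ : s ^+ 2 * (mx_l1 (invmx K) * nsq v) <= _).
  by rewrite ler_wpM2l ?sqr_ge0 // dotC -qform_dot qform_le_mx_l1.
rewrite (_ : _ * (_ * _) = s * mx_l1 (invmx K) * (s * nsq v)); last by ring.
by rewrite sM; have := nsq_ge0 v; nra.
Qed.

Lemma posdef2_qform_lb n (K K' : 'M[R]_n) : sym_posdef K -> sym_posdef K' ->
  exists2 k : R, 0 < k &
    (forall v, k * nsq v <= qform K v) /\ (forall v, k * nsq v <= qform K' v).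
Proof.
move=> /posdef_qform_lb[k k_gt0 K_lb] /posdef_qform_lb[k' k'_gt0 K'_lb].
exists (Num.min k k'); first by rewrite lt_min k_gt0.
split=> v; [apply: le_trans (K_lb v) | apply: le_trans (K'_lb v)];
  by rewrite ler_wpM2r ?nsq_ge0 // ge_min le_refl ?orbT.
Qed.

End Quadratic_forms.

Section Xmat.
Variable R : realType.
Implicit Types K : 'M[R]_3.

Definition shear n (K : 'M[R]_n) : 'M[R]_(n + n) := block_mx 1%:M 0 K 1%:M.

Lemma shear_col_mx n (K : 'M[R]_n) (a b : 'cV[R]_n) :
  shear K *m col_mx a b = col_mx a (K *m a + b).
Proof. by rewrite /shear mul_block_col !mul1mx mul0mx addr0. Qed.

Lemma Xmat_shear K : K^T = K -> Xmat K = (shear K)^T *m shear K.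
Proof.
move=> Ksym; rewrite /shear tr_block_mx Ksym !trmx1 trmx0 mulmx_block.
by rewrite !mul1mx !mulmx1 !mul0mx ?add0r ?addr0.
Qed.

Lemma qform_trmx_mul n (M : 'M[R]_n) v : qform (M^T *m M) v = nsq (M *m v).
Proof. by rewrite qform_dot -mulmxA dot_mulmxr trmxK nsq_dot. Qed.

Lemma qform_Xmat K a b : K^T = K ->
  qform (Xmat K) (col_mx a b) = nsq a + nsq (K *m a + b).
Proof. by move=> Ksym; rewrite Xmat_shear // qform_trmx_mul shear_col_mx nsq_col_mx. Qed.

Lemma det_Xmat K : K^T = K -> \det (Xmat K) = 1.
Proof. by move=> Ksym; rewrite Xmat_shear // det_mulmx det_tr det_lblock !det1 !mulr1. Qed.

Lemma det_1BXmat K : \det (1%:M - Xmat K) = - \det K ^+ 2.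
Proof.
pose L : 'M[R]_(3 + 3) := block_mx 1%:M 0 (- 1%:M) 1%:M.
pose U : 'M[R]_(3 + 3) := block_mx 1%:M 1%:M 0 1%:M.
have LUE : U *m (L *m (1%:M - Xmat K)) = block_mx (- K) 0 (K *m K - K) K.
  rewrite /U /L /Xmat (scalar_mx_block 3 3) opp_block_mx add_block_mx.
  rewrite !mulmx_block !mul1mx !mul0mx !add0r !addr0 !mulNmx !mul1mx.
  by congr block_mx; apply/matrixP => i j; rewrite !mxE; ring.
have := congr1 determinant LUE.
rewrite !det_mulmx det_ublock det_lblock !det1 !mul1r det_lblock => ->.
by rewrite -scaleN1r detZ; ring.
Qed.

Lemma horner_char_poly n (A : 'M[R]_n) x : (char_poly A).[x] = \det (x%:M - A).
Proof.
rewrite -horner_evalE /char_poly -det_map_mx; congr (\det _).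
by apply/matrixP => i j; rewrite !mxE /= horner_evalE; case: (i == j); rewrite /= ?hornerE.
Qed.

Lemma lambda_min_Xmat_le1 K lam : K^T = K -> is_lambda_min (Xmat K) lam -> lam <= 1.
Proof.
move=> Ksym [_ lam_min].
have p0 : (char_poly (Xmat K)).[0] = 1.
  by rewrite horner_coef0 char_poly_det det_Xmat // mulr1 -signr_odd.
have p1 : (char_poly (Xmat K)).[1] <= 0.
  by rewrite horner_char_poly det_1BXmat oppr_le0 sqr_ge0.
have [x /andP[_ x_le1]] : exists2 x, 0 <= x <= 1 & root (- char_poly (Xmat K)) x.
  by apply: poly_ivt; rewrite ?ler01 // !hornerN p0 oppr_ge0 p1 andbT lerN10.
rewrite rootN -eigenvalue_root_char => /lam_min.
by move/le_trans; apply.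
Qed.

Lemma nsq_le_qform_Xmat K a b : K^T = K ->
  nsq (col_mx a b) <= (2 + 2 * mx_l1 (K^T *m K)) * qform (Xmat K) (col_mx a b).
Proof.
move=> Ksym; rewrite qform_Xmat // nsq_col_mx.
have bE : b = (K *m a + b) - K *m a by rewrite addrAC subrr add0r.
have := nsqB_le (K *m a + b) (K *m a); rewrite -bE.
have := nsq_mulmx_le K a; have := nsq_ge0 a; have := nsq_ge0 (K *m a + b).
have := mx_l1_ge0 (K^T *m K); nra.
Qed.

Lemma Xmat_ellipsoid_sub_domD K P (w : 'I_P -> R -> 'cV[R]_3) t r lam :
  K^T = K -> lam <= 1 -> 0 <= r -> (forall j, r <= enorm (w j t)) ->
  [set y | qform (Xmat K) y < lam * r ^+ 2] `<=` domD w t.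
Proof.
move=> Ksym lam_le1 r_ge0 r_le y Ey j; apply/eqP => y1E; move: Ey => /=.
rewrite -[y]vsubmxK qform_Xmat // y1E -enorm_sqr.
have : r ^+ 2 <= enorm (w j t) ^+ 2 by rewrite lerXn2r ?nnegrE ?enorm_ge0.
have := nsq_ge0 (K *m w j t + dsubmx y); have := sqr_ge0 r; nra.
Qed.

End Xmat.

Section Derivative_within.
(* [deriv_within] unfolds to a function type, which derails automatic implicit arguments. *)
Local Unset Implicit Arguments.
Context {R : realType}.
Implicit Types (A : set R) (f g : R -> R) (t c d : R).

Definition deriv_within A f t d :=
  (fun h => h^-1 * (f (t + h) - f t)) @ within (fun h => A (t + h)) 0^' --> d.

Local Notation incr A t := (within (fun h : R => A (t + h)) 0^').

Lemma near_incr_neq0 A t : \forall h \near incr A t, h != 0.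
Proof. exact: (cvg_within _ (nbhs_dnbhs_neq 0)). Qed.

Lemma cvg_incr0 A t : (fun h => h) @ incr A t --> 0.
Proof. by apply: cvg_within_filter; exact: nbhs_dnbhs. Qed.

Lemma deriv_within_cvg {A f t d} :
  deriv_within A f t d -> (fun h => f (t + h)) @ incr A t --> f t.
Proof.
move=> fd; have E : {near incr A t,
    (fun h => f t + h * (h^-1 * (f (t + h) - f t))) =1 (fun h => f (t + h))}.
  by apply: filterS (near_incr_neq0 A t) => h h0; rewrite mulrA mulfV // mul1r addrC subrK.
apply: cvg_trans (near_eq_cvg E) _.
have := cvgD (cvg_cst (f t)) (cvgM (cvg_incr0 A t) fd).
by rewrite mul0r addr0; apply.
Qed.

Lemma deriv_within_continuous {A f t d} :
  deriv_within A f t d -> f @ within A (nbhs t) --> f t.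
Proof.
move=> /deriv_within_cvg /cvgrPdist_lt ft; apply/cvgrPdist_lt => e e_gt0.
move: (ft e e_gt0); rewrite !near_withinE => near_ft.
apply/(nbhs0P (fun x : R => A x -> `|f t - f x| < e)); apply: filterS near_ft => h fth Ath.
by have [->|h0] := eqVneq h 0; [rewrite addr0 subrr normr0 | exact: fth].
Qed.

Lemma deriv_within_cst A t c : deriv_within A (fun _ => c) t 0.
Proof.
rewrite /deriv_within (_ : (fun h => _) = fun _ => 0); first exact: cvg_cst.
by apply/funext => h; rewrite subrr mulr0.
Qed.

Lemma deriv_withinD {A f g t df dg} : deriv_within A f t df -> deriv_within A g t dg ->
  deriv_within A (fun s => f s + g s) t (df + dg).
Proof.
move=> fd gd; rewrite /deriv_within (_ : (fun h => _) =
  (fun h => h^-1 * (f (t + h) - f t) + h^-1 * (g (t + h) - g t))); last first.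
  by apply/funext => h; ring.
exact: cvgD.
Qed.

Lemma deriv_withinMl {A f t} c {df} :
  deriv_within A f t df -> deriv_within A (fun s => c * f s) t (c * df).
Proof.
move=> fd; rewrite /deriv_within (_ : (fun h => _) =
  (fun h => c * (h^-1 * (f (t + h) - f t)))); last by apply/funext => h; ring.
exact: cvgM (cvg_cst c) fd.
Qed.

Lemma deriv_withinM {A f g t df dg} : deriv_within A f t df -> deriv_within A g t dg ->
  deriv_within A (fun s => f s * g s) t (df * g t + f t * dg).
Proof.
move=> fd gd; rewrite /deriv_within (_ : (fun h => _) = (fun h =>
  h^-1 * (f (t + h) - f t) * g (t + h) + f t * (h^-1 * (g (t + h) - g t)))).
  exact: cvgD (cvgM fd (deriv_within_cvg gd)) (cvgM (cvg_cst _) gd).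
by apply/funext => h; ring.
Qed.

Lemma deriv_within_sum {A} {I : Type} (r : seq I) {F : I -> R -> R} {dF t} :
  (forall i, deriv_within A (F i) t (dF i)) ->
  deriv_within A (fun s => \sum_(i <- r) F i s) t (\sum_(i <- r) dF i).
Proof.
move=> Fd; elim: r => [|i r IH].
  rewrite big_nil (_ : (fun s => _) = fun _ => 0); first exact: deriv_within_cst.
  by apply/funext => s; rewrite big_nil.
rewrite big_cons (_ : (fun s => _) = fun s => F i s + \sum_(j <- r) F j s).
  exact: deriv_withinD.
by apply/funext => s; rewrite big_cons.
Qed.

Lemma derive_quotientE f t :
  (fun h => h^-1 *: ((f \o shift t) (h *: 1) - f t)) = (fun h => h^-1 * (f (t + h) - f t)).
Proof. by apply/funext => h; rewrite /= -[h%:A]/(h * 1) mulr1 [h + t]addrC. Qed.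

Lemma is_derive_deriv_within {A f t d} : is_derive t 1 f d -> deriv_within A f t d.
Proof. by case=> fd <-; apply: cvg_within_filter; rewrite -derive_quotientE. Qed.

Lemma deriv_within_expR A t c :
  deriv_within A (fun s => expR (c * s)) t (c * expR (c * t)).
Proof.
apply: is_derive_deriv_within; rewrite mulrC.
apply: is_derive1_comp; rewrite -[c in is_derive _ _ _ c]mulr1.
exact: is_deriveZ.
Qed.

Lemma deriv_within_is_derive {A f t d} :
  nbhs t A -> deriv_within A f t d -> is_derive t 1 f d.
Proof.
move=> At fd.
have qd : (fun h => h^-1 * (f (t + h) - f t)) @ 0^' --> d.
  move=> P /fd Pq; have At' := nbhs_dnbhs ((nbhs0P _ _).1 At).
  by move: Pq; rewrite nbhs_simpl /= /within; apply: filterS2 At' => h Ah; exact.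
by rewrite -derive_quotientE in qd; apply: DeriveDef; [exact: cvgP qd | exact: cvg_lim qd].
Qed.

Lemma deriv_within_nonincr {W dW : R -> R} {a b} :
  {in `[a, b], forall s, deriv_within `[a, b] W s (dW s)} ->
  {in `]a, b[, forall s, dW s <= 0} ->
  {in `[a, b] &, {homo W : x y /~ x <= y}}.
Proof.
move=> Wd dW_le0.
have Wd' s : s \in `]a, b[ -> is_derive s 1 W (dW s).
  move=> sab; apply: deriv_within_is_derive (Wd s (subset_itv_oo_cc sab)).
  by apply: filterS (near_in_itvoo sab) => x /subset_itv_oo_cc.
apply: ler0_derive1_le_cc => [s /Wd' //|s sab|].
  by rewrite derive1E; have [_ ->] := Wd' s sab; exact: dW_le0.
apply/subspace_continuousP => s sab.
exact: deriv_within_continuous (Wd s sab).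
Qed.

Lemma deriv_within_gronwall {V dV : R -> R} {a ts : R} :
  {in `[0, ts], forall s, deriv_within `[0, ts] V s (dV s)} ->
  {in `[0, ts], forall s, dV s <= - a * V s} ->
  {in `[0, ts], forall t, V t <= V 0 * expR (- (a * t))}.
Proof.
move=> Vd dV_le t tI; have /andP[t_ge0 t_le] : 0 <= t <= ts by rewrite in_itv in tI.
have Wt : V t * expR (a * t) <= V 0 * expR (a * 0).
  apply: (@deriv_within_nonincr (fun s => V s * expR (a * s))
    (fun s => dV s * expR (a * s) + V s * (a * expR (a * s))) 0 ts) => //.
  - by move=> s sI; have := deriv_withinM (Vd s sI) (deriv_within_expR _ s a); apply.
  - move=> s /subset_itv_oo_cc/dV_le; have := expR_gt0 (a * s); nra.
  - by rewrite bound_itvE (le_trans t_ge0).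
rewrite mulr0 expR0 mulr1 in Wt.
rewrite -[V t]mulr1 -(expRxMexpNx_1 (a * t)) mulrA.
by apply: ler_wpM2r; rewrite ?expR_ge0.
Qed.

End Derivative_within.

Section Coordinate_derivative.
Local Unset Implicit Arguments.
Context {R : realType}.

Definition coord_deriv_within {n} (A : set R) (v : R -> 'cV[R]_n) (t : R) (dv : 'cV[R]_n) :=
  forall i, deriv_within A (fun s => v s i ord0) t (dv i ord0).

Lemma has_deriv_within_coord {n A} {v : R -> 'cV[R]_n} {t dv} :
  has_deriv_within A v t dv -> coord_deriv_within A v t dv.
Proof.
move=> vd i; have := cvg_comp _ _ vd (@coord_continuous R n 1 i ord0 dv).
rewrite /deriv_within (_ : (fun h => _) = (fun M : 'cV[R]_n => M i ord0) \o
  (fun h => h^-1 *: (v (t + h) - v t))) //.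
by apply/funext => h; rewrite /= !mxE.
Qed.

Lemma coord_deriv_within_mulmxD {n A} (M : 'M[R]_n) {u v : R -> 'cV[R]_n} {t du dv} :
  coord_deriv_within A u t du -> coord_deriv_within A v t dv ->
  coord_deriv_within A (fun s => M *m u s + v s) t (M *m du + dv).
Proof.
move=> ud vd i; rewrite (_ : (fun s => _) =
  (fun s => \sum_j M i j * u s j ord0 + v s i ord0)); last first.
  by apply/funext => s; rewrite !mxE.
rewrite !mxE; apply: deriv_withinD (vd i).
by apply: deriv_within_sum => j; apply: deriv_withinMl.
Qed.

Lemma deriv_within_nsq {n A} {v : R -> 'cV[R]_n} {t dv} :
  coord_deriv_within A v t dv ->
  deriv_within A (fun s => nsq (v s)) t (2 * dot (v t) dv).
Proof.
move=> vd; rewrite (_ : (fun s => _) = (fun s => \sum_i v s i ord0 * v s i ord0)); last first.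
  by apply/funext => s; apply: eq_bigr => i _; rewrite expr2.
rewrite (_ : 2 * _ = \sum_i (dv i ord0 * v t i ord0 + v t i ord0 * dv i ord0)).
  by apply: deriv_within_sum => i; apply: deriv_withinM.
rewrite /dot mxE mulr_sumr; apply: eq_bigr => i _; rewrite mxE; ring.
Qed.

End Coordinate_derivative.

Section Closed_loop.
Variable R : realType.
Variables (K1 K2 : 'M[R]_3) (kappa : R).
Hypothesis K1sym : K1^T = K1.
Hypothesis kappa_ge0 : 0 <= kappa.
Hypothesis K1_lb : forall v, kappa * nsq v <= qform K1 v.
Hypothesis K2_lb : forall v, kappa * nsq v <= qform K2 v.

Lemma f_a_addr_control P mu (w : 'I_P -> R -> 'cV[R]_3) t z1 z2 :
  f_a mu w t z1 + control mu w K1 K2 t z1 z2 =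
  - ((1%:M + K2 *m K1) *m z1) - (K1 + K2) *m z2.
Proof. by rewrite /control addrC subrK. Qed.

Lemma closed_loop_errorE (z1 z2 : 'cV[R]_3) :
  K1 *m z2 + (- ((1%:M + K2 *m K1) *m z1) - (K1 + K2) *m z2) =
  - z1 - K2 *m (K1 *m z1 + z2).
Proof.
rewrite mulmxDl mul1mx mulmxDl mulmxDr -mulmxA.
by apply/matrixP => i j; rewrite !mxE; ring.
Qed.

Lemma closed_loop_decay ts (z1 z2 : R -> 'cV[R]_3) :
  {in `[0, ts], forall s, has_deriv_within `[0, ts] z1 s (z2 s)} ->
  {in `[0, ts], forall s, has_deriv_within `[0, ts] z2 s
     (- ((1%:M + K2 *m K1) *m z1 s) - (K1 + K2) *m z2 s)} ->
  {in `[0, ts], forall t, qform (Xmat K1) (col_mx (z1 t) (z2 t)) <=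
     qform (Xmat K1) (col_mx (z1 0) (z2 0)) * expR (- (2 * kappa * t))}.
Proof.
move=> z1d z2d t tI; rewrite !qform_Xmat //.
pose e s := K1 *m z1 s + z2 s.
apply: (deriv_within_gronwall (ts := ts) (V := fun s => nsq (z1 s) + nsq (e s))
  (dV := fun s => 2 * dot (z1 s) (z2 s) + 2 * dot (e s) (- z1 s - K2 *m e s))) => // s sI.
  have d1 := has_deriv_within_coord (z1d s sI).
  have de := coord_deriv_within_mulmxD K1 d1 (has_deriv_within_coord (z2d s sI)).
  rewrite closed_loop_errorE in de.
  exact: deriv_withinD (deriv_within_nsq d1) (deriv_within_nsq de).
have ez1 : dot (e s) (z1 s) = qform K1 (z1 s) + dot (z1 s) (z2 s).
  by rewrite dotDl qform_dot !(dotC (z1 s)).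
rewrite dotDr !dotNr ez1 -qform_dot.
have := K1_lb (z1 s); have := K2_lb (e s); lra.
Qed.

(* [2 + 2 |K1^T K1|_1] bounds [|z|^2] by the Lyapunov function and [|X|_1] bounds
   it back; the [+ 1] only keeps the gain positive. *)
Definition decay_gain : R :=
  Num.sqrt ((2 + 2 * mx_l1 (K1^T *m K1)) * (mx_l1 (Xmat K1) + 1)).

Lemma decay_gain_gt0 : 0 < decay_gain.
Proof.
rewrite sqrtr_gt0; have := mx_l1_ge0 (K1^T *m K1); have := mx_l1_ge0 (Xmat K1); nra.
Qed.

Lemma closed_loop_stable ts (z1 z2 : R -> 'cV[R]_3) :
  {in `[0, ts], forall s, has_deriv_within `[0, ts] z1 s (z2 s)} ->
  {in `[0, ts], forall s, has_deriv_within `[0, ts] z2 s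
     (- ((1%:M + K2 *m K1) *m z1 s) - (K1 + K2) *m z2 s)} ->
  {in `[0, ts], forall t,
     qform (Xmat K1) (col_mx (z1 t) (z2 t)) <= qform (Xmat K1) (col_mx (z1 0) (z2 0)) /\
     enorm (col_mx (z1 t) (z2 t)) <=
       decay_gain * enorm (col_mx (z1 0) (z2 0)) * expR (- (kappa * t))}.
Proof.
move=> z1d z2d t tI; have Vt := closed_loop_decay z1d z2d tI.
have /andP[t_ge0 _] : 0 <= t <= ts by rewrite in_itv in tI.
set zt := col_mx (z1 t) (z2 t) in Vt *; set z0 := col_mx (z1 0) (z2 0) in Vt *.
have V0_ge0 : 0 <= qform (Xmat K1) z0 by rewrite qform_Xmat // addr_ge0 ?nsq_ge0.
have decay_ge0 := expR_ge0 (- (2 * kappa * t)).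
have decay_le1 : expR (- (2 * kappa * t)) <= 1 by rewrite expR_le1 oppr_le0 !mulr_ge0.
split; first by nra.
rewrite mulrAC; apply: enorm_le_nsq; first by rewrite mulr_ge0 ?expR_ge0 ?ltW ?decay_gain_gt0.
rewrite exprMn sqr_sqrtr; last first.
  by have := mx_l1_ge0 (K1^T *m K1); have := mx_l1_ge0 (Xmat K1); nra.
rewrite -expRM_natl mulrN -!mulrA.
apply: le_trans (nsq_le_qform_Xmat (z1 t) (z2 t) K1sym) _.
apply: ler_wpM2l; first by have := mx_l1_ge0 (K1^T *m K1); lra.
apply: le_trans Vt _; rewrite mulrCA mulrC [2 * (_ * _)]mulrA.
apply: ler_wpM2l => //.
by have := qform_le_mx_l1 (Xmat K1) z0; have := nsq_ge0 z0; lra.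
Qed.

End Closed_loop.

Theorem corollary1 (R : realType) (K1 K2 : 'M[R]_3) :
  sym_posdef K1 -> sym_posdef K2 ->
  exists c1 c2 : R, 0 < c1 /\ 0 < c2 /\
  forall (P : nat) (hP : (0 < P)%N) (mu : 'I_P -> R)
         (rj : 'I_P -> R -> 'cV[R]_3) (rstar : R -> 'cV[R]_3),
    (forall j, 0 < mu j) ->
    (forall j, C1_nonneg (rj j)) ->
    (forall t, rj (Ordinal hP) t = 0) ->
    C1_nonneg rstar ->
    (forall t j, 0 <= t -> rstar t != rj j t) ->
    let w := fun j t => rj j t - rstar t in
    forall (ts : R), 0 < ts ->
    forall r : R,
      (forall j t, 0 <= t <= ts -> r <= enorm (w j t)) ->
      (exists j t, 0 <= t <= ts /\ r = enorm (w j t)) ->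
    forall lam : R, is_lambda_min (Xmat K1) lam ->
    let E := [set y : 'cV[R]_(3 + 3) | qform (Xmat K1) y < lam * r ^+ 2] in
    (forall t, 0 <= t <= ts -> E `<=` domD w t) /\
    (forall z1 z2 : R -> 'cV[R]_3,
       let z := fun t => col_mx (z1 t) (z2 t) in
       (forall t, 0 <= t <= ts ->
          has_deriv_within `[0, ts] z1 t (z2 t)) ->
       (forall t, 0 <= t <= ts ->
          has_deriv_within `[0, ts] z2 t
            (f_a mu w t (z1 t) + control mu w K1 K2 t (z1 t) (z2 t))) ->
       E (z 0) ->
       forall t, 0 <= t <= ts ->
         E (z t) /\ enorm (z t) <= c1 * enorm (z 0) * expR (- (c2 * t))).
Proof.
move=> PK1 PK2; have [K1sym _] := PK1.
have [kappa kappa_gt0 [K1_lb K2_lb]] := posdef2_qform_lb PK1 PK2.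
exists (decay_gain K1), kappa; split; first exact: decay_gain_gt0.
split=> // P hP mu rj rstar _ _ _ _ _ w ts _ r r_le [j0 [t0 [_ r_def]]] lam lam_min E.
have r_ge0 : 0 <= r by rewrite r_def enorm_ge0.
have lam_le1 := lambda_min_Xmat_le1 K1sym lam_min.
split=> [t tI | z1 z2 z z1d z2d Ez0 t tI].
  exact: Xmat_ellipsoid_sub_domD K1sym lam_le1 r_ge0 (fun j => r_le j t tI).
have z1d' : {in `[0, ts], forall s, has_deriv_within `[0, ts] z1 s (z2 s)}.
  by move=> s; rewrite in_itv; exact: z1d.
have z2d' : {in `[0, ts], forall s, has_deriv_within `[0, ts] z2 s
    (- ((1%:M + K2 *m K1) *m z1 s) - (K1 + K2) *m z2 s)}.
  by move=> s; rewrite in_itv -(f_a_addr_control K1 K2 mu w s); exact: z2d.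
have tI' : t \in `[0, ts] by rewrite in_itv.
have [Vt zt] := closed_loop_stable K1sym (ltW kappa_gt0) K1_lb K2_lb z1d' z2d' tI'.
by split=> //; apply: le_lt_trans Vt Ez0.
Qed.
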